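(* For $z\in\mathbb R$ let \[p_1(z)=-7+30z-24z^2-14z^3+12z^4-6z^5+2z^6,\] \[p_2(z)=81-324z+1188z^2-1404z^3-216z^4+1404z^5-972z^6+432z^7-108z^8,\] \[\mathcal Q(z)=\frac13(z^2-z+1)-\frac{\sqrt[3]{2}\,(3-(z^2-z+1)^2)}{3\sqrt[3]{p_1(z)+\sqrt{p_2(z)}}}+\frac{\sqrt[3]{p_1(z)+\sqrt{p_2(z)}}}{3\sqrt[3]{2}}.\] If $v\in(0.35,1/2)$, then $\mathcal Q(v)<4v/5$. If $v\in[0.22,0.35]$, then $\mathcal Q(v)<9v/10$. *)

From Stdlib Require Import Reals.
Open Scope R_scope.

Definition cbrt (x : R) : R :=
  if Rlt_dec 0 x then Rpower x (1/3)
  else if Rlt_dec x 0 then - Rpower (- x) (1/3)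
  else 0.

Definition p1 (z : R) : R :=
  -7 + 30*z - 24*z^2 - 14*z^3 + 12*z^4 - 6*z^5 + 2*z^6.

Definition p2 (z : R) : R :=
  81 - 324*z + 1188*z^2 - 1404*z^3 - 216*z^4 + 1404*z^5
  - 972*z^6 + 432*z^7 - 108*z^8.

Definition Qf (z : R) : R :=
  (1/3) * (z^2 - z + 1)
  - (cbrt 2 * (3 - (z^2 - z + 1)^2)) / (3 * cbrt (p1 z + sqrt (p2 z)))
  + cbrt (p1 z + sqrt (p2 z)) / (3 * cbrt 2).

(* Cardano: with a = z^2 - z + 1 and m = 3 - a^2 > 0, the discriminant p2 equals
   p1^2 + 4 m^3, and 3 Q(z) - a is the unique real root y of y^3 + 3 m y = p1(z).
   Since y |-> y^3 + 3 m y is increasing, Q(v) < k v amounts to the polynomial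
   inequality (3 k v - a)^3 + 3 m (3 k v - a) > p1(v), which holds on the given
   intervals. *)
From Stdlib Require Import Reals Lra Psatz.
Open Scope R_scope.

Lemma cbrt_pos (x : R) : 0 < x -> 0 < cbrt x.
Proof.
  intro Hx; unfold cbrt; destruct (Rlt_dec 0 x); [apply exp_pos | lra].
Qed.

Lemma cbrt_cube (x : R) : 0 < x -> cbrt x ^ 3 = x.
Proof.
  intro Hx; unfold cbrt; destruct (Rlt_dec 0 x) as [_|]; [|lra].
  rewrite <- Rpower_pow by apply exp_pos.
  rewrite Rpower_mult; replace (1/3 * INR 3) with 1 by (simpl; field).
  exact (Rpower_1 _ Hx).
Qed.

Definition cardano_root (p m : R) : R :=
  let C := cbrt (p + sqrt (p ^ 2 + 4 * m ^ 3)) in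
  C / cbrt 2 - m * cbrt 2 / C.

Section Cardano.

Variables p m : R.
Hypothesis m_pos : 0 < m.

Let s := sqrt (p ^ 2 + 4 * m ^ 3).

Lemma cardano_sqrt_sqr : s * s = p ^ 2 + 4 * m ^ 3.
Proof. apply sqrt_sqrt; pose proof (pow_lt m 3 m_pos); nra. Qed.

Lemma cardano_radicand_pos : 0 < p + s.
Proof.
  pose proof (pow_lt m 3 m_pos); pose proof cardano_sqrt_sqr.
  assert (0 <= s) by apply sqrt_pos.
  nra.
Qed.

Lemma cardano_rootP : cardano_root p m ^ 3 + 3 * m * cardano_root p m = p.
Proof.
  pose proof cardano_sqrt_sqr as Hs; pose proof cardano_radicand_pos as HX.
  pose proof (cbrt_pos _ HX) as HC; pose proof (cbrt_cube _ HX) as HC3.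
  assert (HD : 0 < cbrt 2) by (apply cbrt_pos; lra).
  assert (HD3 : cbrt 2 ^ 3 = 2) by (apply cbrt_cube; lra).
  unfold cardano_root; fold s.
  set (C := cbrt (p + s)) in *; set (D := cbrt 2) in *.
  (* with t = C / D: (t - m/t)^3 + 3 m (t - m/t) = t^3 - m^3/t^3, and (p + s)(s - p) = 4 m^3 *)
  assert (E : (C / D - m * D / C) ^ 3 + 3 * m * (C / D - m * D / C)
              = C ^ 3 / D ^ 3 - m ^ 3 * D ^ 3 / C ^ 3) by (field; lra).
  rewrite E, HC3, HD3.
  replace (m ^ 3) with ((s * s - p ^ 2) / 4) by lra.
  field; lra.
Qed.

End Cardano.

Lemma depressed_cubic_lt (m y b : R) :
  0 <= m -> y ^ 3 + 3 * m * y < b ^ 3 + 3 * m * b -> y < b.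
Proof.
  intros Hm Hlt; destruct (Rlt_or_le y b) as [|Hby]; [assumption|].
  assert (0 <= y ^ 2 + y * b + b ^ 2 + 3 * m) by nra.
  assert (0 <= (y - b) * (y ^ 2 + y * b + b ^ 2 + 3 * m)) by (apply Rmult_le_pos; lra).
  nra.
Qed.

Lemma p2_discriminant (z : R) :
  p2 z = p1 z ^ 2 + 4 * (3 - (z ^ 2 - z + 1) ^ 2) ^ 3.
Proof. unfold p1, p2; ring. Qed.

Lemma Qf_cardano (z : R) :
  0 < 3 - (z ^ 2 - z + 1) ^ 2 ->
  Qf z = (z ^ 2 - z + 1 + cardano_root (p1 z) (3 - (z ^ 2 - z + 1) ^ 2)) / 3.
Proof.
  intro Hm.
  pose proof (cbrt_pos _ (cardano_radicand_pos (p1 z) _ Hm)).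
  assert (0 < cbrt 2) by (apply cbrt_pos; lra).
  unfold Qf, cardano_root; rewrite p2_discriminant; field; lra.
Qed.

Lemma Qf_lt_of_cubic (z k : R) :
  0 <= z <= 1 ->
  let a := z ^ 2 - z + 1 in
  let b := 3 * k * z - a in
  b ^ 3 + 3 * (3 - a ^ 2) * b > p1 z -> Qf z < k * z.
Proof.
  intros Hz a b Hb.
  assert (Hm : 0 < 3 - a ^ 2) by (unfold a; nra).
  rewrite (Qf_cardano z Hm); fold a.
  assert (Hy : cardano_root (p1 z) (3 - a ^ 2) < b).
  { apply (depressed_cubic_lt (3 - a ^ 2)); [lra|].
    rewrite cardano_rootP by exact Hm; lra. }
  unfold b in Hy; lra.
Qed.

Theorem lemma4p3 :
  (forall v : R, 35/100 < v < 1/2 -> Qf v < 4 * v / 5) /\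
  (forall v : R, 22/100 <= v <= 35/100 -> Qf v < 9 * v / 10).
Proof.
  split; intros v Hv.
  - replace (4 * v / 5) with (4 / 5 * v) by field.
    apply Qf_lt_of_cubic; [lra|]; unfold p1; nra.
  - replace (9 * v / 10) with (9 / 10 * v) by field.
    apply Qf_lt_of_cubic; [lra|]; unfold p1; nra.
Qed.
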